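(* Let $B$ be a ring in which every left regular element is regular. Let $S\subseteq S_0(B)$ be a multiplicative subset of $B$ such that $S^{-1}B$ exists. Then: (i) $Q_l(B)$ exists if and only if $Q_l(S^{-1}B)$ exists, and in that case $Q_l(B)\cong Q_l(S^{-1}B)$; (ii) $B$ is semiprime left Goldie if and only if $S^{-1}B$ is semiprime left Goldie. The right-side version also holds, for a ring $B$ in which every right regular element is regular, with $BS^{-1}$ and $Q_r$ in place of $S^{-1}B$ and $Q_l$.
   Context: Rings are associative with identity. $S_0(B)$ is the set of regular elements (non-zero-divisors) of $B$. An element $x$ is left regular if $rx=0$ implies $r=0$, and right regular if $xr=0$ implies $r=0$. A multiplicative subset $S$ satisfies $1\in S$, $0\notin S$, and is closed under products. $S^{-1}B$ (respectively $BS^{-1}$) is the left (respectively right) ring of fractions of $B$ with respect to $S$. $Q_l(C)$ (respectively $Q_r(C)$) denotes the left (respectively right) total ring of fractions of a ring $C$, i.e. the classical left (right) ring of fractions of $C$ with respect to $S_0(C)$, when it exists. *)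

From HB Require Import structures.
From mathcomp Require Import all_boot all_order all_algebra.
Set Implicit Arguments. Unset Strict Implicit. Unset Printing Implicit Defensive.
Import GRing.Theory.
Local Open Scope ring_scope.

Section Defs.
Variable B : nzRingType.

Definition left_regular (x : B) : Prop := forall r : B, r * x = 0 -> r = 0.
Definition right_regular (x : B) : Prop := forall r : B, x * r = 0 -> r = 0.
Definition regular (x : B) : Prop := left_regular x /\ right_regular x.

Definition multiplicative (S : B -> Prop) : Prop :=
  [/\ S 1, ~ S 0 & forall a b, S a -> S b -> S (a * b)].

Definition invertible (x : B) : Prop := exists y : B, x * y = 1 /\ y * x = 1.

Definition additive_subgroup (I : B -> Prop) : Prop :=
  I 0 /\ forall x y, I x -> I y -> I (x - y).
Definition left_ideal (I : B -> Prop) : Prop :=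
  additive_subgroup I /\ forall r x, I x -> I (r * x).
Definition right_ideal (I : B -> Prop) : Prop :=
  additive_subgroup I /\ forall r x, I x -> I (x * r).
Definition two_sided_ideal (I : B -> Prop) : Prop :=
  additive_subgroup I /\ forall r x, I x -> I (r * x) /\ I (x * r).

Definition semiprime : Prop :=
  forall I : B -> Prop, two_sided_ideal I ->
    (forall x y, I x -> I y -> x * y = 0) -> forall x, I x -> x = 0.

Definition lann (X : B -> Prop) : B -> Prop := fun r => forall x, X x -> r * x = 0.
Definition rann (X : B -> Prop) : B -> Prop := fun r => forall x, X x -> x * r = 0.

Definition acc_lann : Prop :=
  forall X : nat -> B -> Prop,
    (forall n r, lann (X n) r -> lann (X n.+1) r) ->
    exists N, forall n, (N <= n)%N -> forall r, lann (X n) r <-> lann (X N) r.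
Definition acc_rann : Prop :=
  forall X : nat -> B -> Prop,
    (forall n r, rann (X n) r -> rann (X n.+1) r) ->
    exists N, forall n, (N <= n)%N -> forall r, rann (X n) r <-> rann (X N) r.

Definition independent (I : nat -> B -> Prop) : Prop :=
  forall (n : nat) (x : nat -> B), (forall i, (i < n)%N -> I i (x i)) ->
    \sum_(i < n) x i = 0 -> forall i, (i < n)%N -> x i = 0.

Definition finite_left_udim : Prop :=
  ~ exists I : nat -> B -> Prop,
      [/\ forall n, left_ideal (I n), forall n, exists2 x, I n x & x <> 0
        & independent I].
Definition finite_right_udim : Prop :=
  ~ exists I : nat -> B -> Prop,
      [/\ forall n, right_ideal (I n), forall n, exists2 x, I n x & x <> 0
        & independent I].

Definition left_goldie : Prop := acc_lann /\ finite_left_udim.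
Definition right_goldie : Prop := acc_rann /\ finite_right_udim.
Definition semiprime_left_goldie : Prop := semiprime /\ left_goldie.
Definition semiprime_right_goldie : Prop := semiprime /\ right_goldie.
End Defs.

(* (A, f) is a left ring of fractions of B w.r.t. S:
   f(s) invertible for s in S, every q is f(s)^{-1} f(b) (i.e. f(s) q = f(b)),
   and ker f = { b | s b = 0 for some s in S }. *)
Definition is_left_fractions (B A : nzRingType) (S : B -> Prop)
    (f : {rmorphism B -> A}) : Prop :=
  [/\ forall s, S s -> invertible (f s),
      forall q : A, exists s b, S s /\ f s * q = f b
    & forall b, f b = 0 <-> exists s, S s /\ s * b = 0].

(* right ring of fractions: q = f(b) f(s)^{-1}, kernel { b | b s = 0 } *)
Definition is_right_fractions (B A : nzRingType) (S : B -> Prop)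
    (f : {rmorphism B -> A}) : Prop :=
  [/\ forall s, S s -> invertible (f s),
      forall q : A, exists s b, S s /\ q * f s = f b
    & forall b, f b = 0 <-> exists s, S s /\ b * s = 0].

Definition is_Ql (B A : nzRingType) (f : {rmorphism B -> A}) : Prop :=
  is_left_fractions (@regular B) f.
Definition is_Qr (B A : nzRingType) (f : {rmorphism B -> A}) : Prop :=
  is_right_fractions (@regular B) f.

Definition Ql_exists (B : nzRingType) : Prop :=
  exists (A : nzRingType) (f : {rmorphism B -> A}), is_Ql f.
Definition Qr_exists (B : nzRingType) : Prop :=
  exists (A : nzRingType) (f : {rmorphism B -> A}), is_Qr f.

Definition ring_isomorphic (A1 A2 : nzRingType) : Prop :=
  exists h : {rmorphism A1 -> A2}, bijective h.

(* Since [S] consists of regular elements, [B] embeds in [A = S^-1 B] and every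
   element of [A] has the form [f(s)^-1 f(b)].  The hypothesis that left regular
   elements of [B] are regular is exactly what keeps regular elements of [B]
   regular in [A]; with the universal property of left fractions this identifies
   [Q_l(B)] and [Q_l(A)] as soon as either exists.  For (ii), semiprimeness,
   annihilators and independent families of left ideals are moved along [f] by
   clearing denominators with the Ore condition.  ACC on left annihilators of [A]
   is the delicate step: a strictly ascending chain would yield an infinite
   direct sum of left ideals of [B], because a semiprime ring with ACC on left
   annihilators has zero left singular ideal.  The right-hand statements are the
   left-hand ones for the converse ring. *)

From Pilot Require Import Defs.
From HB Require Import structures.
From mathcomp Require Import all_boot all_order all_algebra.
From Stdlib Require Import ClassicalEpsilon Classical.
Set Implicit Arguments. Unset Strict Implicit. Unset Printing Implicit Defensive.
Import GRing.Theory.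
Local Open Scope ring_scope.

Definition pack_rmorphism (R S : nzRingType) (h : R -> S)
    (hB : zmod_morphism h) (hM : monoid_morphism h) : {rmorphism R -> S} :=
  HB.pack h (GRing.isZmodMorphism.Build R S h hB)
            (GRing.isMonoidMorphism.Build R S h hM).

Section Elements.
Variable R : nzRingType.
Implicit Types x y a b : R.

Lemma invertible_mulrI x : invertible x -> injective ( *%R x).
Proof. by case=> y [_ yx] a b e; rewrite -[a]mul1r -[b]mul1r -yx -!mulrA e. Qed.

Lemma invertible_mulr_eq0 x a : invertible x -> x * a = 0 -> a = 0.
Proof. by move=> ix e; apply: (invertible_mulrI ix); rewrite mulr0. Qed.

Lemma invertibleM x y : invertible x -> invertible y -> invertible (x * y).
Proof.
case=> u [xu ux] [v [yv vy]]; exists (v * u); split.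
  by rewrite mulrA -(mulrA x) yv mulr1.
by rewrite mulrA -(mulrA v) ux mulr1.
Qed.

Lemma invertible_regular x : invertible x -> regular x.
Proof.
move=> ix; split=> r e; last exact: invertible_mulr_eq0 ix e.
by case: ix => y [xy _]; rewrite -[r]mulr1 -xy mulrA e mul0r.
Qed.

Lemma regularM x y : regular x -> regular y -> regular (x * y).
Proof.
case=> lx rx [ly ry]; split=> r e.
  by apply: lx; apply: ly; rewrite -mulrA.
by apply: ry; apply: rx; rewrite mulrA.
Qed.

Lemma regular_multiplicative : Defs.multiplicative (@regular R).
Proof.
split; last exact: regularM.
  by split=> r; rewrite ?mulr1 ?mul1r.
by case=> l _; have /eqP := l 1 (mulr0 1); rewrite oner_eq0.
Qed.

End Elements.

Lemma chain_le (T : Type) (P : nat -> T -> Prop) :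
  (forall n y, P n y -> P n.+1 y) -> forall m n y, (m <= n)%N -> P m y -> P n y.
Proof. by move=> succ m n y /subnK <-; elim: (n - m)%N => // k IH /IH /succ. Qed.

Section LeftIdeals.
Variable R : nzRingType.
Implicit Types (x y b : R) (I K : R -> Prop).

Lemma left_idealD I : left_ideal I -> forall x y, I x -> I y -> I (x + y).
Proof.
case=> [[I0 IB] _] x y Ix Iy; have := IB x (0 - y) Ix (IB _ _ I0 Iy).
by rewrite sub0r opprK.
Qed.

Lemma left_ideal_sum I n (x : nat -> R) : left_ideal I ->
  (forall i, (i < n)%N -> I (x i)) -> I (\sum_(i < n) x i).
Proof.
move=> lI hx; elim/big_ind: _ => //; first by case: lI => [[]].
  exact: left_idealD.
by move=> i _; apply: hx.
Qed.

Lemma left_ideal_mulr K b : left_ideal K ->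
  left_ideal (fun y => exists2 k, K k & y = k * b).
Proof.
case=> [[K0 KB] KM]; split; first split.
- by exists 0; rewrite ?mul0r.
- move=> _ _ [k1 K1 ->] [k2 K2 ->]; exists (k1 - k2); first exact: KB.
  by rewrite mulrBl.
- by move=> r _ [k K1 ->]; exists (r * k); [exact: KM | rewrite mulrA].
Qed.

Lemma independent_chain (L I : nat -> R -> Prop) :
  (forall n, left_ideal (L n)) -> (forall m n y, (m <= n)%N -> L m y -> L n y) ->
  (forall j y, I j y -> L j.+1 y) -> (forall j y, I j y -> L j y -> y = 0) ->
  independent I.
Proof.
move=> L_ideal L_mono IL I_disj n x; elim: n => [|n IH] Ix sx i ilt //.
rewrite big_ord_recr /= in sx.
have Ls : L n (\sum_(i < n) x i).
  apply: (left_ideal_sum (L_ideal n)) => j jn.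
  exact: (L_mono j.+1 n _ jn (IL _ _ (Ix j (ltnW jn)))).
have xn0 : x n = 0.
  apply: (I_disj n); first exact: Ix.
  have -> : x n = 0 - \sum_(i < n) x i by apply/eqP; rewrite sub0r -addr_eq0 addrC sx.
  by case: (L_ideal n) => [[L0 LB] _]; apply: LB.
rewrite xn0 addr0 in sx.
move: ilt; rewrite ltnS leq_eqVlt => /orP [/eqP -> // | lt].
by apply: IH => // j jn; apply/Ix/ltnW.
Qed.

Lemma finite_left_udim_chain (L : nat -> R -> Prop) : finite_left_udim R ->
  (forall n, left_ideal (L n)) -> (forall n y, L n y -> L n.+1 y) ->
  exists N, forall n K, (N <= n)%N -> left_ideal K -> (forall y, K y -> L n y) ->
    (forall y, K y -> L N y -> y = 0) -> forall y, K y -> y = 0.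
Proof.
move=> udim L_ideal L_succ; apply: NNPP => no_stable.
have step N : exists p : nat * (R -> Prop),
    [/\ (N <= p.1)%N, left_ideal p.2, (exists2 y, p.2 y & y <> 0),
      (forall y, p.2 y -> L p.1 y) & (forall y, p.2 y -> L N y -> y = 0)].
  apply: NNPP => nstep; apply: no_stable; exists N => n K Nn lK KL KN.
  move=> y Ky; apply: NNPP => y0; apply: nstep.
  by exists (n, K); split=> //; exists y.
pose G N := proj1_sig (constructive_indefinite_description _ (step N)).
have GP N : [/\ (N <= (G N).1)%N, left_ideal (G N).2, (exists2 y, (G N).2 y & y <> 0),
    (forall y, (G N).2 y -> L (G N).1 y) & (forall y, (G N).2 y -> L N y -> y = 0)].
  by rewrite /G; case: (constructive_indefinite_description _ _).
pose sq j := iter j (fun N => (G N).1) 0%N.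
have sq_mono i j : (i <= j)%N -> (sq i <= sq j)%N.
  move/subnK <-; elim: (j - i)%N => // k IH.
  by apply: leq_trans IH _; case: (GP (sq (k + i)%N)).
apply: udim; exists (fun j => (G (sq j)).2); split.
- by move=> j; case: (GP (sq j)).
- by move=> j; case: (GP (sq j)).
apply: (independent_chain (L := fun j => L (sq j))) => //.
- by move=> m n y /sq_mono; apply: chain_le.
- by move=> j y; case: (GP (sq j)) => _ _ _ + _; apply.
- by move=> j y; case: (GP (sq j)) => _ _ _ _; apply.
Qed.

End LeftIdeals.

Section SemiprimeGoldie.
Variable R : nzRingType.
Implicit Types x y a b r : R.

Lemma semiprimeP :
  semiprime R <-> (forall x, (forall a, x * a * x = 0) -> x = 0).
Proof.
split=> [sp x hx|sp I [_ IM] I2 x Ix]; last first.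
  by apply: sp => a; rewrite -mulrA I2 //; case: (IM a x Ix).
pose K y := forall a, y * a * x = 0.
have KL r y : K y -> K (r * y).
  by move=> Ky a; have := Ky a; rewrite -!mulrA => ->; rewrite mulr0.
have KR r y : K y -> K (y * r) by move=> Ky a; have := Ky (r * a); rewrite -!mulrA.
(* With [K = {y | y R x = 0}], [x] lies in the ideal [{y in K | K y = 0}],
   whose square is zero. *)
pose I y := K y /\ forall z, K z -> z * y = 0.
apply: (sp I); last by split=> // y Ky; have := Ky 1; rewrite mulr1.
  split.
    split; first by split=> [a|y _]; rewrite ?mul0r ?mulr0.
    move=> y z [Ky K2y] [Kz K2z]; split.
      by move=> a; rewrite !mulrBl Ky Kz subrr.
    by move=> u Ku; rewrite mulrBr K2y ?K2z // subrr.
  move=> r y [Ky K2y]; split; split; try by [apply: KL | apply: KR].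
    by move=> u Ku; rewrite mulrA K2y //; apply: KR.
  by move=> u Ku; rewrite mulrA K2y // mul0r.
by move=> y z [Ky _] [_ K2z]; apply: K2z.
Qed.

Lemma acc_lann_dcc_rann : acc_lann R -> forall X : nat -> R -> Prop,
  (forall n r, rann (X n.+1) r -> rann (X n) r) ->
  exists k, forall r, rann (X k) r -> rann (X k.+1) r.
Proof.
move=> acc X ch.
have [N HN] := acc (fun n => rann (X n)) (fun n r h y Y => h y (ch n y Y)).
exists N => r hr x Xx.
exact: (HN N.+1 (leqnSn N) x).1 (fun y hy => hy x Xx) r hr.
Qed.

Definition essential (E : R -> Prop) : Prop :=
  forall K, left_ideal K -> (exists2 k, K k & k <> 0) ->
    exists k, [/\ K k, E k & k <> 0].

Lemma essentialS (E E' : R -> Prop) :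
  essential E -> (forall x, E x -> E' x) -> essential E'.
Proof.
move=> eE sub K lK /(eE K lK) [k [Kk Ek k0]].
by exists k; split=> //; apply: sub.
Qed.

Lemma essential_colon (E : R -> Prop) a :
  E 0 -> essential E -> essential (fun c => E (c * a)).
Proof.
move=> E0 eE K lK [k0 Kk0 k00].
case: (classic (exists2 k, K k & k * a <> 0)) => [[k Kk ka]|nk]; last first.
  exists k0; split=> //; suff -> : k0 * a = 0 by [].
  by apply: NNPP => ne; apply: nk; exists k0.
case: (eE _ (left_ideal_mulr a lK)) => [|_ [[k1 K1 ->] Ey y0]].
  by exists (k * a) => //; exists k.
by exists k1; split=> // e; apply: y0; rewrite e mul0r.
Qed.

Lemma acc_lann_maximal (T : R -> Prop) x0 : acc_lann R -> T x0 -> x0 <> 0 ->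
  exists a, [/\ T a, a <> 0 & forall a', T a' -> a' <> 0 ->
    (forall r, r * a = 0 -> r * a' = 0) -> forall r, r * a' = 0 -> r * a = 0].
Proof.
move=> acc Tx0 x00; apply: NNPP => no_max.
have step a : exists a', T a /\ a <> 0 ->
    [/\ T a', a' <> 0, (forall r, r * a = 0 -> r * a' = 0) &
      ~ (forall r, r * a' = 0 -> r * a = 0)].
  case: (classic (T a /\ a <> 0)) => [[Ta a0]|nh]; last by exists 0.
  apply: NNPP => nn; apply: no_max; exists a; split=> // a' Ta' a'0 sub.
  by apply: NNPP => ns; apply: nn; exists a'.
pose g a := proj1_sig (constructive_indefinite_description _ (step a)).
have gP a : T a /\ a <> 0 ->
    [/\ T (g a), g a <> 0, (forall r, r * a = 0 -> r * g a = 0) &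
      ~ (forall r, r * g a = 0 -> r * a = 0)].
  by rewrite /g; case: (constructive_indefinite_description _ _).
pose sq n := iter n g x0.
have sqP n : T (sq n) /\ sq n <> 0.
  by elim: n => [|n /gP []] //=.
have ch n r : lann (eq^~ (sq n)) r -> lann (eq^~ (sq n.+1)) r.
  by move=> h y ->; have [_ _ + _] := gP _ (sqP n); apply; apply: h.
have [N HN] := acc _ ch.
have [_ _ _] := gP _ (sqP N); apply => r hr.
by apply: ((HN N.+1 (leqnSn N) r).1 (fun y e => etrans (congr1 _ e) hr)).
Qed.

(* The element [a] of [T] with maximal left annihilator satisfies [a R a = 0]. *)
Lemma semiprime_nil_eq0 (T : R -> Prop) : semiprime R -> acc_lann R ->
  (forall x r, T x -> T (x * r)) -> (forall x, T x -> exists n, x ^+ n = 0) ->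
  forall x, T x -> x = 0.
Proof.
move=> sp acc TR Tnil x0 Tx0; apply: NNPP => x00.
have [a [Ta a0 amax]] := acc_lann_maximal acc Tx0 x00.
apply/a0/(proj1 semiprimeP sp) => r.
have [n] := Tnil _ (TR a r Ta); elim: n => [|n IH h].
  by rewrite expr0 => /eqP; rewrite oner_eq0.
case: (classic ((a * r) ^+ n = 0)) => [/IH //|un].
case: n IH h un => [_|m _ h un]; first by rewrite expr1 => ->; rewrite mul0r.
have Tu : T ((a * r) ^+ m.+1) by rewrite exprS -mulrA; apply: TR.
apply: (amax _ Tu un); last by rewrite -exprS.
by move=> c; rewrite exprS -!mulrA mulrA => ->; rewrite mul0r.
Qed.

Lemma left_singular_eq0 x : semiprime R -> acc_lann R ->
  essential (fun r => r * x = 0) -> x = 0.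
Proof.
move=> sp acc; apply: (semiprime_nil_eq0 (T := fun y => essential (fun r => r * y = 0)))
  => // {x} [x r ex|x ex].
  by apply: (essentialS ex) => c e; rewrite mulrA e mul0r.
have ch n r : lann (eq^~ (x ^+ n)) r -> lann (eq^~ (x ^+ n.+1)) r.
  by move=> h y ->; rewrite exprSr mulrA (h _ erefl) mul0r.
have [N HN] := acc _ ch.
exists N; apply: NNPP => xN0.
have lK : left_ideal (fun y => exists2 c, True & y = c * x ^+ N).
  by apply: left_ideal_mulr; split; first split.
case: (ex _ lK) => [|_ [[c _ ->] e y0]].
  by exists (x ^+ N) => //; exists 1; rewrite ?mul1r.
apply/y0/((HN N.+1 (leqnSn N) c).1) => // y ->.
by rewrite exprSr mulrA.
Qed.

Lemma acc_lann_rann_mulV (Y : R -> Prop) u v : acc_lann R ->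
  v * u = 1 -> u * v = 1 -> (forall y, Y y -> Y (y * u)) ->
  forall p, rann Y p -> rann Y (v * p).
Proof.
move=> acc vu uv Yu p Yp.
pose X k z := exists2 y, Y y & z = y * v ^+ k.
have ch k r : rann (X k.+1) r -> rann (X k) r.
  move=> h _ [y Yy ->]; have := h (y * u * v ^+ k.+1) (ex_intro2 _ _ _ (Yu y Yy) erefl).
  by rewrite exprS mulrA -(mulrA y) uv mulr1.
have [k hk] := acc_lann_dcc_rann acc ch.
have vuk j : v ^+ j * u ^+ j = 1.
  elim: j => [|j IH]; first by rewrite !expr0 mul1r.
  by rewrite exprS exprSr mulrA -(mulrA v) IH mulr1 vu.
have Xk : rann (X k) (u ^+ k * p).
  by move=> _ [y Yy ->]; rewrite -mulrA (mulrA (v ^+ k)) vuk mul1r; apply: Yp.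
move=> y Yy; have := hk _ Xk (y * v ^+ k.+1) (ex_intro2 _ _ _ Yy erefl).
by rewrite exprS -!mulrA (mulrA (v ^+ k)) vuk mul1r.
Qed.

End SemiprimeGoldie.

Section LeftFractions.
Variables (B A : nzRingType) (S : B -> Prop) (f : {rmorphism B -> A}).
Hypotheses (HS : Defs.multiplicative S) (Hf : is_left_fractions S f).

Let S1 : S 1. Proof. by case: HS. Qed.
Let SM a b : S a -> S b -> S (a * b). Proof. by case: HS => _ _; apply. Qed.
Let f_invertible s : S s -> invertible (f s). Proof. by case: Hf => h _ _; apply: h. Qed.
Let f_rep (q : A) : exists s b, S s /\ f s * q = f b. Proof. by case: Hf. Qed.
Let f_ker b : f b = 0 -> exists s, S s /\ s * b = 0.
Proof. by case: Hf => _ _ h /h. Qed.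

Lemma left_fractions_ore s (q : A) : S s -> exists t d, S t /\ f t * q = f d * f s.
Proof.
move=> Ss; case: (f_invertible Ss) => v [sv vs]; case: (f_rep (q * v)) => t [d [St e]].
by exists t, d; split=> //; rewrite -e -!mulrA vs mulr1.
Qed.

Section Universal.
Variables (C : nzRingType) (g : {rmorphism B -> C}).
Hypothesis g_invertible : forall s, S s -> invertible (g s).

Lemma left_fractions_lift_eq x y : f x = f y -> g x = g y.
Proof.
move=> e; have /f_ker [u [Su ue]] : f (x - y) = 0 by rewrite rmorphB e subrr.
apply/eqP; rewrite -subr_eq0; apply/eqP.
by apply: (invertible_mulr_eq0 (g_invertible Su)); rewrite -rmorphB -rmorphM ue rmorph0.
Qed.

(* Two representations [f(s)^-1 f(b)] of [q] are compared through a common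
   left multiple given by the Ore condition. *)
Lemma left_fractions_lift_value q :
  exists c, forall s b, S s -> f s * q = f b -> g s * c = g b.
Proof.
case: (f_rep q) => s0 [b0 [Ss0 e0]]; case: (g_invertible Ss0) => w [sw _].
exists (w * g b0) => s b Ss e.
case: (left_fractions_ore (f s0) Ss) => t [d [St etd]].
have e1 : f (t * s0) = f (d * s) by rewrite !rmorphM.
have e2 : f (t * b0) = f (d * b) by rewrite !rmorphM -e0 -e mulrA etd mulrA.
have g1 := left_fractions_lift_eq e1; have g2 := left_fractions_lift_eq e2.
have ig : invertible (g d).
  have ids : invertible (g (d * s)) by rewrite -g1; apply/g_invertible/SM.
  case: (g_invertible Ss) => v [sv vs].
  have -> : g d = g (d * s) * v by rewrite rmorphM -mulrA sv mulr1.
  by apply: invertibleM ids _; exists (g s).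
apply: (invertible_mulrI ig).
rewrite mulrA -rmorphM -g1 rmorphM -mulrA (mulrA (g s0)) sw mul1r.
by rewrite -rmorphM g2 rmorphM.
Qed.

Definition left_fractions_lift (q : A) : C :=
  proj1_sig (constructive_indefinite_description _ (left_fractions_lift_value q)).

Local Notation h := left_fractions_lift.

Lemma left_fractions_liftP q s b : S s -> f s * q = f b -> g s * h q = g b.
Proof.
by rewrite /h; case: (constructive_indefinite_description _ _) => c /=; apply.
Qed.

Lemma left_fractions_lift_f b : h (f b) = g b.
Proof. by have := @left_fractions_liftP (f b) 1 b S1; rewrite !rmorph1 !mul1r; apply. Qed.

Lemma left_fractions_liftB : zmod_morphism h.
Proof.
move=> q1 q2.
case: (f_rep q1) => s1 [b1 [S1' e1]]; case: (f_rep q2) => s2 [b2 [S2' e2]].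
case: (left_fractions_ore (f s1) S2') => t [d [St etd]].
apply: (invertible_mulrI (g_invertible (SM St S1'))).
have -> : g (t * s1) * h (q1 - q2) = g (t * b1 - d * b2).
  apply: left_fractions_liftP; first exact: SM.
  by rewrite rmorphM mulrBr -mulrA e1 rmorphB !rmorphM etd -mulrA e2.
have gts : g (t * s1) = g (d * s2) by apply: left_fractions_lift_eq; rewrite !rmorphM.
rewrite mulrBr {2}gts !rmorphM -!mulrA.
rewrite (left_fractions_liftP S1' e1) (left_fractions_liftP S2' e2).
by rewrite rmorphB !rmorphM.
Qed.

Lemma left_fractions_liftM : monoid_morphism h.
Proof.
split; first by rewrite -(rmorph1 f) left_fractions_lift_f rmorph1.
move=> q1 q2.
case: (f_rep q1) => s1 [b1 [S1' e1]]; case: (f_rep q2) => s2 [b2 [S2' e2]].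
case: (left_fractions_ore (f b1) S2') => t [d [St etd]].
apply: (invertible_mulrI (g_invertible (SM St S1'))).
have -> : g (t * s1) * h (q1 * q2) = g (d * b2).
  apply: left_fractions_liftP; first exact: SM.
  by rewrite rmorphM -mulrA (mulrA (f s1)) e1 mulrA etd -mulrA e2 rmorphM.
have gts : g (t * b1) = g (d * s2) by apply: left_fractions_lift_eq; rewrite !rmorphM.
symmetry.
rewrite (rmorphM g t s1) -(mulrA (g t)) (mulrA (g s1)) (left_fractions_liftP S1' e1).
rewrite mulrA -(rmorphM g t b1) gts (rmorphM g d s2) -mulrA.
by rewrite (left_fractions_liftP S2' e2) -rmorphM.
Qed.

Lemma left_fractions_universal : exists h : {rmorphism A -> C},
  (forall b, h (f b) = g b) /\
  (forall q s b, S s -> f s * q = f b -> g s * h q = g b).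
Proof.
exists (pack_rmorphism left_fractions_liftB left_fractions_liftM).
by split; [exact: left_fractions_lift_f | exact: left_fractions_liftP].
Qed.

End Universal.

Section RegularDenominators.
Hypothesis Sreg : forall s, S s -> regular s.

Lemma fraction_map_eq0 x : f x = 0 -> x = 0.
Proof. by case/f_ker => s [/Sreg [_ r] /r]. Qed.

Lemma fraction_map_inj : injective f.
Proof.
move=> x y e; apply/eqP; rewrite -subr_eq0; apply/eqP/fraction_map_eq0.
by rewrite rmorphB e subrr.
Qed.

Lemma left_ore s x : S s -> exists t d, S t /\ t * x = d * s.
Proof.
move=> Ss; case: (left_fractions_ore (f x) Ss) => t [d [St e]].
by exists t, d; split=> //; apply: fraction_map_inj; rewrite !rmorphM.
Qed.

Lemma regular_of_fraction_map b : regular (f b) -> regular b.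
Proof.
case=> l r; split=> x e; apply: fraction_map_eq0.
  by apply: l; rewrite -rmorphM e rmorph0.
by apply: r; rewrite -rmorphM e rmorph0.
Qed.

Lemma regular_of_fraction q s b : S s -> f s * q = f b -> regular q -> regular b.
Proof.
move=> Ss e rq; apply: regular_of_fraction_map; rewrite -e.
by apply: regularM rq; apply/invertible_regular/f_invertible.
Qed.

Lemma semiprime_fractions : semiprime B -> semiprime A.
Proof.
move=> /semiprimeP spB; apply/semiprimeP => x hx.
case: (f_rep x) => s [b [Ss e]].
suff b0 : b = 0 by apply: (invertible_mulr_eq0 (f_invertible Ss)); rewrite e b0 rmorph0.
apply: spB => c; apply: fraction_map_eq0; rewrite !rmorphM -e.
have -> : f s * x * f c * (f s * x) = f s * (x * (f c * f s) * x) by rewrite !mulrA.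
by rewrite hx mulr0.
Qed.

Lemma finite_left_udim_fractions : finite_left_udim B -> finite_left_udim A.
Proof.
move=> udB [I [lI nzI indI]]; apply: udB.
exists (fun n b => I n (f b)); split.
- move=> n; case: (lI n) => [[I0 IB] IM]; split; first split.
  + by rewrite rmorph0.
  + by move=> x y h1 h2; rewrite rmorphB; apply: IB.
  + by move=> r x h; rewrite rmorphM; apply: IM.
- move=> n; case: (nzI n) => x Ix x0; case: (f_rep x) => s [b [Ss e]].
  exists b; first by rewrite -e; case: (lI n) => _; apply.
  by move=> b0; apply/x0/(invertible_mulr_eq0 (f_invertible Ss)); rewrite e b0 rmorph0.
- move=> n x hx sx i ilt; apply/fraction_map_eq0/(indI n (fun i => f (x i))) => //.
  by rewrite -rmorph_sum sx rmorph0.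
Qed.

Lemma acc_lann_of_fractions : acc_lann A -> acc_lann B.
Proof.
move=> accA X ch.
pose Y n (a : A) := exists2 x, X n x & a = f x.
have YX n r : lann (Y n) (f r) <-> lann (X n) r.
  split=> [h x Xx|h _ [x Xx ->]]; last by rewrite -rmorphM h // rmorph0.
  by apply: fraction_map_eq0; rewrite rmorphM; apply: h; exists x.
have chA n r : lann (Y n) r -> lann (Y n.+1) r.
  move=> h; case: (f_rep r) => s [b [Ss e]].
  have /ch /YX hb : lann (X n) b.
    by apply/YX => _ [x Xx ->]; rewrite -e -mulrA h ?mulr0 //; exists x.
  by move=> _ [x Xx ->]; apply: (invertible_mulr_eq0 (f_invertible Ss)); rewrite mulrA e hb //; exists x.
have [N HN] := accA Y chA; exists N => n Nn r.
by rewrite -YX HN // YX.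
Qed.

Definition fraction_ideal (J : B -> Prop) (a : A) : Prop :=
  exists s b, [/\ S s, J b & f s * a = f b].

Lemma left_ideal_fraction_ideal J : left_ideal J -> left_ideal (fraction_ideal J).
Proof.
case=> [[J0 JB] JM]; split; first split.
- by exists 1, 0; split; rewrite ?mulr0 ?rmorph0.
- move=> a1 a2 [s1 [b1 [S1' J1 e1]]] [s2 [b2 [S2' J2 e2]]].
  case: (left_ore s1 S2') => t [d [St ets]].
  exists (t * s1), (t * b1 - d * b2); split; [exact: SM | by apply: JB; apply: JM |].
  rewrite mulrBr rmorphB; congr (_ - _); first by rewrite rmorphM -mulrA e1 rmorphM.
  by rewrite ets rmorphM -mulrA e2 rmorphM.
- move=> r a [s [b [Ss Jb e]]]; case: (left_fractions_ore r Ss) => t [d [St e']].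
  exists t, (d * b); split=> //; first exact: JM.
  by rewrite mulrA e' -mulrA e rmorphM.
Qed.

Lemma fraction_ideal_common_denominator (J : nat -> B -> Prop) n (a : nat -> A) :
  (forall i, left_ideal (J i)) -> (forall i, (i < n)%N -> fraction_ideal (J i) (a i)) ->
  exists t (c : nat -> B), S t /\
    forall i, (i < n)%N -> J i (c i) /\ f t * a i = f (c i).
Proof.
move=> lJ; elim: n => [|n IH] ha; first by exists 1, (fun _ => 0).
case: (IH (fun i hi => ha i (ltnW hi))) => t [c [St hc]].
case: (ha n (ltnSn n)) => s [b [Ss Jb e]].
case: (left_ore t Ss) => t' [d [St' etd]].
exists (t' * t), (fun i => if (i < n)%N then t' * c i else d * b); split.
  exact: SM.
move=> i; rewrite ltnS leq_eqVlt => /orP [/eqP ->|lt].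
  rewrite ltnn; split; first by case: (lJ n) => _; apply.
  by rewrite etd rmorphM -mulrA e rmorphM.
rewrite lt; case: (hc i lt) => Jc ec; split; first by case: (lJ i) => _; apply.
by rewrite rmorphM -mulrA ec rmorphM.
Qed.

Lemma finite_left_udim_of_fractions : finite_left_udim A -> finite_left_udim B.
Proof.
move=> udA [J [lJ nzJ indJ]]; apply: udA.
exists (fun n => fraction_ideal (J n)); split.
- by move=> n; apply: left_ideal_fraction_ideal.
- move=> n; case: (nzJ n) => b Jb b0; exists (f b).
    by exists 1, b; split; rewrite ?rmorph1 ?mul1r.
  by move/fraction_map_eq0.
move=> n x hx sx i ilt.
case: (fraction_ideal_common_denominator lJ hx) => t [c [St hc]].
have sumc : \sum_(i < n) c i = 0.
  apply: fraction_map_eq0; rewrite rmorph_sum.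
  rewrite (eq_bigr (fun i : 'I_n => f t * x i)); last by move=> j _; rewrite (hc j (ltn_ord j)).2.
  by rewrite -mulr_sumr sx mulr0.
have c0 := indJ n c (fun i hi => (hc i hi).1) sumc i ilt.
by apply: (invertible_mulr_eq0 (f_invertible St)); rewrite (hc i ilt).2 c0 rmorph0.
Qed.

Lemma semiprime_of_fractions : semiprime A -> acc_lann A -> semiprime B.
Proof.
move=> spA accA; apply/semiprimeP => x hx.
apply/fraction_map_eq0/(proj1 (semiprimeP A) spA) => a.
case: (f_rep a) => s [b [Ss e]]; case: (f_invertible Ss) => v [sv vs].
have -> : a = v * f b by rewrite -e mulrA vs mul1r.
pose Y y := exists c, y = f (x * c).
have Yfs y : Y y -> Y (y * f s) by case=> c ->; exists (c * s); rewrite -rmorphM mulrA.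
have Ybx : rann Y (f (b * x)).
  by move=> _ [c ->]; rewrite -rmorphM mulrA -(mulrA x) hx rmorph0.
have := acc_lann_rann_mulV accA vs sv Yfs Ybx (ex_intro _ 1 erefl).
by rewrite mulr1 rmorphM !mulrA.
Qed.

Lemma lann_fraction_essential (X : A -> Prop) r : semiprime B -> acc_lann B ->
  essential (fun c => lann X (f (c * r))) -> lann X (f r).
Proof.
move=> spB accB ess x Xx; case: (f_rep (f r * x)) => s [b [Ss e]].
suff b0 : b = 0 by apply: (invertible_mulr_eq0 (f_invertible Ss)); rewrite e b0 rmorph0.
apply: (left_singular_eq0 spB accB).
apply: (essentialS (@essential_colon _ _ s _ ess)); first by rewrite mul0r => y _; rewrite rmorph0 mul0r.
by move=> c h; apply: fraction_map_eq0; rewrite rmorphM -e !mulrA -!rmorphM; exact: h.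
Qed.

(* By finite uniform dimension [L N] is essential in [L n] for [n >= N], and
   since the left singular ideal of [B] vanishes this forces [L n = L N]. *)
Lemma acc_lann_fractions :
  semiprime B -> acc_lann B -> finite_left_udim B -> acc_lann A.
Proof.
move=> spB accB udB X ch.
pose L n b := lann (X n) (f b).
have L_ideal n : left_ideal (L n).
  split; first split.
  - by move=> x _; rewrite rmorph0 mul0r.
  - by move=> x y h1 h2 z Xz; rewrite rmorphB mulrBl h1 // h2 // subrr.
  - by move=> r x h z Xz; rewrite rmorphM -mulrA h // mulr0.
have [N HN] := finite_left_udim_chain udB L_ideal (fun n b => ch n (f b)).
exists N => n Nn r; split; last exact: (chain_le (P := fun n => lann (X n)) ch).
move=> hn; case: (f_rep r) => s [b [Ss e]].
suff LNb : L N b.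
  by move=> x Xx; apply: (invertible_mulr_eq0 (f_invertible Ss)); rewrite mulrA e; apply: LNb.
apply: (lann_fraction_essential spB accB) => K lK [k Kk k0].
apply: NNPP => nk.
have K_disj k' : K k' -> L N (k' * b) -> k' = 0.
  by move=> Kk' Lk'; apply: NNPP => k'0; apply: nk; exists k'.
have kb0 : k * b = 0.
  apply: (HN n _ Nn (left_ideal_mulr b lK)); last by exists k.
    by move=> _ [k' _ ->] x Xx; rewrite rmorphM -mulrA -e -mulrA hn // !mulr0.
  by move=> _ [k' Kk' ->] /(K_disj _ Kk') ->; rewrite mul0r.
by apply/k0/(K_disj _ Kk); rewrite kb0; case: (L_ideal N) => [[]].
Qed.

Hypothesis left_regular_regular : forall x : B, left_regular x -> regular x.

(* Right regularity of [f c] is the only place where left regular elements of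
   [B] must be regular: [f c q = 0] only yields [d b = 0] with [d] left regular. *)
Lemma regular_fraction_map c : regular c -> regular (f c).
Proof.
move=> [lc rc]; split=> q e; case: (f_rep q) => s [b [Ss eb]].
  have /lc b0 : b * c = 0.
    by apply: fraction_map_eq0; rewrite rmorphM -eb -mulrA e mulr0.
  by apply: (invertible_mulr_eq0 (f_invertible Ss)); rewrite eb b0 rmorph0.
case: (left_ore c Ss) => t [d [St tcds]].
have db : d * b = 0.
  apply: fraction_map_eq0.
  by rewrite rmorphM -eb mulrA -rmorphM -tcds rmorphM -mulrA e mulr0.
have ld : left_regular d.
  move=> r rd; have /lc : r * t * c = 0 by rewrite -mulrA tcds mulrA rd mul0r.
  by case: (Sreg St) => lt _; apply: lt.
have [_ /(_ _ db) b0] := left_regular_regular ld.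
by apply: (invertible_mulr_eq0 (f_invertible Ss)); rewrite eb b0 rmorph0.
Qed.

Lemma is_Ql_comp (Q : nzRingType) (g : {rmorphism A -> Q}) :
  is_Ql g -> is_Ql (g \o f : {rmorphism B -> Q}).
Proof.
case=> g_inv g_rep g_ker; split.
- by move=> c /regular_fraction_map /g_inv.
- move=> q; case: (g_rep q) => a1 [a2 [ra1 e]].
  case: (f_rep a1) => s1 [b1 [S1' e1]]; case: (f_rep a2) => s2 [b2 [S2' e2]].
  case: (left_ore s1 S2') => t [d [St etd]].
  exists (t * b1), (d * b2); split.
    exact/regularM/(regular_of_fraction S1' e1)/ra1/Sreg.
  rewrite /= !rmorphM -e1 -e2 !rmorphM -!mulrA e !mulrA -!rmorphM.
  by rewrite etd.
- move=> b /=; split.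
    case/g_ker => a [[_ ra] e]; exists 1; split; first by case: (regular_multiplicative B).
    by rewrite mul1r; apply/fraction_map_eq0/ra.
  by case=> c [[_ rc] /rc ->]; rewrite !rmorph0.
Qed.

Lemma is_Ql_fractions (Q : nzRingType) (g : {rmorphism B -> Q}) :
  is_Ql g -> exists h : {rmorphism A -> Q}, is_Ql h.
Proof.
case=> g_inv g_rep g_ker.
have g_invS s : S s -> invertible (g s) by move/Sreg/g_inv.
have [h [hf hs]] := left_fractions_universal g_invS.
exists h; split.
- move=> a ra; case: (f_rep a) => s [b [Ss e]].
  have rb := regular_of_fraction Ss e ra.
  case: (g_invS _ Ss) => v [sv vs].
  have -> : h a = v * g b by rewrite -(hs _ _ _ Ss e) mulrA vs mul1r.
  by apply: invertibleM (g_inv _ rb); exists (g s).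
- move=> q; case: (g_rep q) => c [b [rc e]].
  by exists (f c), (f b); split; [exact: regular_fraction_map | rewrite !hf].
- move=> a; split; last by case=> a' [[_ ra] /ra ->]; rewrite rmorph0.
  move=> ha; case: (f_rep a) => s [b [Ss e]].
  have := hs _ _ _ Ss e; rewrite ha mulr0 => /esym /g_ker [c [[_ rc] /rc b0]].
  exists 1; split; first by case: (regular_multiplicative A).
  by rewrite mul1r; apply: (invertible_mulr_eq0 (f_invertible Ss)); rewrite e b0 rmorph0.
Qed.

End RegularDenominators.

End LeftFractions.

Lemma Ql_unique (B Q1 Q2 : nzRingType) (g1 : {rmorphism B -> Q1})
    (g2 : {rmorphism B -> Q2}) :
  is_Ql g1 -> is_Ql g2 -> ring_isomorphic Q1 Q2.
Proof.
move=> H1 H2; have [g1_inv g1_rep _] := H1; have [g2_inv g2_rep _] := H2.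
have [h [hf hs]] := left_fractions_universal (regular_multiplicative B) H1 g2_inv.
have [k [kf ks]] := left_fractions_universal (regular_multiplicative B) H2 g1_inv.
exists h; exists k.
- move=> q; case: (g1_rep q) => c [b [rc e]].
  apply: (invertible_mulrI (g1_inv _ rc)).
  by rewrite e -kf -(kf b) -(hs _ _ _ rc e) rmorphM.
- move=> q; case: (g2_rep q) => c [b [rc e]].
  apply: (invertible_mulrI (g2_inv _ rc)).
  by rewrite e -hf -(hf b) -(ks _ _ _ rc e) rmorphM.
Qed.

Section ConverseRing.
Variable R : nzRingType.

Lemma semiprime_converse : semiprime R <-> semiprime R^c.
Proof.
split=> sp I [[I0 IB] IM] I2 x Ix; apply: (sp I) => // [|y z Iy Iz]; try exact: I2.
  by split=> // r y Iy; case: (IM r y Iy).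
by split=> // r y Iy; case: (IM r y Iy).
Qed.

Lemma semiprime_right_goldie_converse :
  semiprime_right_goldie R <-> semiprime_left_goldie R^c.
Proof. by split; case=> sp g; split=> //; apply/semiprime_converse. Qed.

End ConverseRing.

Lemma monoid_morphism_converse (R S : nzRingType) (h : R -> S) :
  monoid_morphism h -> monoid_morphism (h : R^c -> S^c).
Proof. by case=> h1 hM; split=> // x y; exact: hM y x. Qed.

Definition converse_rmorphism (R S : nzRingType) (g : {rmorphism R -> S}) :
  {rmorphism R^c -> S^c} :=
  pack_rmorphism (rmorphB g : zmod_morphism (g : R^c -> S^c))
    (monoid_morphism_converse (rmorph1 g, rmorphM g)).

(* Typechecks because the ring operations of [R^c^c] are convertible to those of [R]. *)
Definition unconverse_rmorphism (R S : nzRingType) (g : {rmorphism R^c -> S}) :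
  {rmorphism R -> S^c} :=
  pack_rmorphism (h := g : R -> S^c) (rmorphB g)
    (monoid_morphism_converse (rmorph1 g, rmorphM g)).

Section ConverseFractions.
Variables (R Q : nzRingType) (S : R -> Prop).

Lemma is_left_fractions_converse (g : {rmorphism R -> Q}) :
  is_right_fractions S g -> is_left_fractions (S : R^c -> Prop) (converse_rmorphism g).
Proof.
case=> g_inv g_rep g_ker; split=> //.
by move=> s /g_inv [y [sy ys]]; exists y.
Qed.

Lemma is_right_fractions_unconverse (g : {rmorphism R^c -> Q}) :
  is_left_fractions (S : R^c -> Prop) g -> is_right_fractions S (unconverse_rmorphism g).
Proof.
case=> g_inv g_rep g_ker; split=> //.
by move=> s /g_inv [y [sy ys]]; exists y.
Qed.

End ConverseFractions.

Lemma is_left_fractions_eq (R Q : nzRingType) (S S' : R -> Prop)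
    (g : {rmorphism R -> Q}) :
  (forall x, S x <-> S' x) -> is_left_fractions S g -> is_left_fractions S' g.
Proof.
move=> SS' [g_inv g_rep g_ker]; split.
- by move=> s /SS' /g_inv.
- by move=> q; case: (g_rep q) => s [b [/SS' Ss e]]; exists s, b.
- by move=> b; rewrite g_ker; split=> -[s [/SS' Ss e]]; exists s.
Qed.

Lemma is_Ql_converse (R Q : nzRingType) (g : {rmorphism R -> Q}) :
  is_Qr g -> is_Ql (converse_rmorphism g).
Proof.
move/is_left_fractions_converse; apply: is_left_fractions_eq => x.
by split; case.
Qed.

Lemma Qr_exists_converse (R : nzRingType) : Qr_exists R <-> Ql_exists R^c.
Proof.
split=> [[Q [g /is_Ql_converse Hg]]|[Q [g Hg]]]; first by exists Q^c, (converse_rmorphism g).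
exists Q^c, (unconverse_rmorphism g); apply: is_right_fractions_unconverse.
by apply: is_left_fractions_eq Hg; split; case.
Qed.

Lemma ring_isomorphic_unconverse (Q1 Q2 : nzRingType) :
  ring_isomorphic Q1^c Q2^c -> ring_isomorphic Q1 Q2.
Proof.
case=> h hbij.
exists (pack_rmorphism (h := h : Q1 -> Q2) (rmorphB h)
         (monoid_morphism_converse (rmorph1 h, rmorphM h))).
exact: hbij.
Qed.

Lemma left_fractions_Ql_goldie (B A : nzRingType) (S : B -> Prop)
    (f : {rmorphism B -> A}) :
  (forall x : B, left_regular x -> regular x) -> Defs.multiplicative S ->
  (forall s, S s -> regular s) -> is_left_fractions S f ->
  [/\ Ql_exists B <-> Ql_exists A,
      (forall (Q1 Q2 : nzRingType) (g1 : {rmorphism B -> Q1})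
              (g2 : {rmorphism A -> Q2}),
         is_Ql g1 -> is_Ql g2 -> ring_isomorphic Q1 Q2)
    & semiprime_left_goldie B <-> semiprime_left_goldie A].
Proof.
move=> LR HS Sreg Hf; split.
- split=> [[Q [g /(is_Ql_fractions HS Hf Sreg LR) [h Hh]]]|[Q [g Hg]]].
    by exists Q, h.
  by exists Q, (g \o f : {rmorphism B -> Q}); exact: (is_Ql_comp Hf Sreg LR Hg).
- move=> Q1 Q2 g1 g2 H1 H2; exact: Ql_unique H1 (is_Ql_comp Hf Sreg LR H2).
split=> [[sp [acc ud]]|[sp [acc ud]]]; split.
- exact: semiprime_fractions Hf Sreg sp.
- split; first exact: acc_lann_fractions Hf Sreg sp acc ud.
  exact: finite_left_udim_fractions Hf Sreg ud.
- exact: semiprime_of_fractions Hf Sreg sp acc.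
- split; first exact: acc_lann_of_fractions Hf Sreg acc.
  exact: finite_left_udim_of_fractions HS Hf Sreg ud.
Qed.

Lemma right_fractions_Qr_goldie (B A : nzRingType) (S : B -> Prop)
    (f : {rmorphism B -> A}) :
  (forall x : B, right_regular x -> regular x) -> Defs.multiplicative S ->
  (forall s, S s -> regular s) -> is_right_fractions S f ->
  [/\ Qr_exists B <-> Qr_exists A,
      (forall (Q1 Q2 : nzRingType) (g1 : {rmorphism B -> Q1})
              (g2 : {rmorphism A -> Q2}),
         is_Qr g1 -> is_Qr g2 -> ring_isomorphic Q1 Q2)
    & semiprime_right_goldie B <-> semiprime_right_goldie A].
Proof.
move=> RR [S1 S0 SM] Sreg Hf.
have [] := left_fractions_Ql_goldie _ _ _ (is_left_fractions_converse Hf).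
- by move=> x /RR [].
- by split=> // x y Sx Sy; apply: SM.
- by move=> s /Sreg [].
move=> QlBA QlIso goldieBA; split.
- by rewrite !Qr_exists_converse.
- move=> Q1 Q2 g1 g2 /is_Ql_converse H1 /is_Ql_converse H2.
  exact/ring_isomorphic_unconverse/(QlIso _ _ _ _ H1 H2).
- by rewrite !semiprime_right_goldie_converse.
Qed.

(* Make [multiplicative] refer to [Defs] again rather than [GRing.Theory]. *)
Import Defs.

Theorem proposition4p6 :
  (* left version *)
  (forall (B : nzRingType) (S : B -> Prop),
     (forall x : B, left_regular x -> regular x) ->
     multiplicative S ->
     (forall s, S s -> regular s) ->
     (exists (A : nzRingType) (f : {rmorphism B -> A}), is_left_fractions S f) ->
     forall (A : nzRingType) (f : {rmorphism B -> A}), is_left_fractions S f ->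
       [/\ Ql_exists B <-> Ql_exists A,
           (forall (Q1 Q2 : nzRingType) (g1 : {rmorphism B -> Q1})
                   (g2 : {rmorphism A -> Q2}),
              is_Ql g1 -> is_Ql g2 -> ring_isomorphic Q1 Q2)
         & semiprime_left_goldie B <-> semiprime_left_goldie A]) /\
  (* right version *)
  (forall (B : nzRingType) (S : B -> Prop),
     (forall x : B, right_regular x -> regular x) ->
     multiplicative S ->
     (forall s, S s -> regular s) ->
     (exists (A : nzRingType) (f : {rmorphism B -> A}), is_right_fractions S f) ->
     forall (A : nzRingType) (f : {rmorphism B -> A}), is_right_fractions S f ->
       [/\ Qr_exists B <-> Qr_exists A,
           (forall (Q1 Q2 : nzRingType) (g1 : {rmorphism B -> Q1})
                   (g2 : {rmorphism A -> Q2}),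
              is_Qr g1 -> is_Qr g2 -> ring_isomorphic Q1 Q2)
         & semiprime_right_goldie B <-> semiprime_right_goldie A]).
Proof.
split=> B S regB HS Sreg _ A f Hf.
  exact: left_fractions_Ql_goldie regB HS Sreg Hf.
exact: right_fractions_Qr_goldie regB HS Sreg Hf.
Qed.
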